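(* Let $f$ be a polynomial with integer coefficients of degree $r\ge3$ with positive leading coefficient, positive and strictly increasing on $[0,\infty)$, and let $g_N(x)=f'(x)\left(1-\frac{f(x)}{f(N)}\right)\big/\int_0^N f'(t)\left(1-\frac{f(t)}{f(N)}\right)dt$. Let $\mathcal{I}_N=\bigcup_{a\in\mathbb{Z}}[a-N^{-r+\frac1r},a+N^{-r+\frac1r}]$. Then \[ \liminf_{N\to\infty}\inf_{\alpha\in\mathcal{I}_N}\sum_{j=1}^N g_N(j)\left[e(\alpha f(j))+e(-\alpha f(j))\right]\ge0. \]
   Context: $e(\alpha)=e^{2\pi i\alpha}$. *)

From Stdlib Require Import Reals ZArith.
From Coquelicot Require Import Coquelicot.
Open Scope R_scope.

Definition e (a : R) : C := (cos (2 * PI * a), sin (2 * PI * a)).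

Definition fpoly (c : nat -> Z) (r : nat) (x : R) : R :=
  sum_f_R0 (fun k => IZR (c k) * x ^ k) r.

Definition hN (c : nat -> Z) (r N : nat) (x : R) : R :=
  Derive (fpoly c r) x * (1 - fpoly c r x / fpoly c r (INR N)).

Definition gN (c : nat -> Z) (r N : nat) (x : R) : R :=
  hN c r N x / RInt (hN c r N) 0 (INR N).

Definition in_IN (r N : nat) (alpha : R) : Prop :=
  exists a : Z,
    IZR a - Rpower (INR N) (- INR r + / INR r) <= alpha <=
    IZR a + Rpower (INR N) (- INR r + / INR r).

Definition SN (c : nat -> Z) (r N : nat) (alpha : R) : C :=
  sum_n_m (fun j : nat =>
     Cmult (RtoC (gN c r N (INR j)))
           (Cplus (e (alpha * fpoly c r (INR j))) (e (- alpha * fpoly c r (INR j)))))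
    1 N.

Definition infN (c : nat -> Z) (r N : nat) : R :=
  real (Glb_Rbar (fun y => exists alpha, in_IN r N alpha /\ y = Re (SN c r N alpha))).

(* Since [f j] is an integer, [alpha] may be replaced by its distance [beta] to an
   integer, [|beta| <= N^(-r+1/r)], and the real part of the sum becomes
   [(2/I) sum_j H j] with [H x = f' x (1 - f x / f N) cos (2 pi beta f x)] and
   [I = int_0^N f' (1 - f / f N) >= f N / 8].  Comparing the sum with
   [int_0^N H] costs [N] times the oscillation of [H] on unit intervals, i.e.
   [O(N^(r-1) + |beta| N^(2r-1))].  Substituting [u = f x], the integral is
   [int_(f 0)^(f N) (1 - u / f N) cos (2 pi beta u) du >= - f 0], because the
   same integral over [[0, f N]] is the nonnegative Fejer-type quantity
   [(1 - cos (2 pi beta f N)) / ((2 pi beta)^2 f N)].  Dividing by [I >= N^r/16]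
   leaves a lower bound [- O(N^(-1/2))]. *)

From Stdlib Require Import Reals ZArith Lra Lia.
From Coquelicot Require Import Coquelicot.
Open Scope R_scope.

Definition rpoly (a : nat -> R) (n : nat) (x : R) : R :=
  sum_f_R0 (fun k => a k * x ^ k) n.

Definition dcoef (a : nat -> R) (k : nat) : R := INR (S k) * a (S k).

Definition coef_norm (a : nat -> R) (n : nat) : R := sum_f_R0 (fun k => Rabs (a k)) n.

Lemma coef_norm_ge0 a n : 0 <= coef_norm a n.
Proof. apply cond_pos_sum; intros k; apply Rabs_pos. Qed.

Lemma rpoly_abs_le a n x b :
  1 <= b -> Rabs x <= b -> Rabs (rpoly a n x) <= coef_norm a n * b ^ n.
Proof.
  intros Hb Hx. eapply Rle_trans; [apply Rsum_abs|].
  unfold coef_norm. rewrite Rmult_comm, scal_sum.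
  apply sum_Rle; intros k Hk.
  rewrite Rabs_mult, <- RPow_abs.
  apply Rmult_le_compat_l; [apply Rabs_pos|].
  apply Rle_trans with (b ^ k); [|apply Rle_pow; assumption].
  apply pow_incr; split; [apply Rabs_pos | assumption].
Qed.

Lemma is_derive_rpoly a n x : is_derive (rpoly a (S n)) x (rpoly (dcoef a) n x).
Proof.
  induction n as [|n IHn].
  - unfold rpoly, dcoef; simpl. auto_derive; [easy|]. ring.
  - change (is_derive (fun y => rpoly a (S n) y + a (S (S n)) * y ^ S (S n)) x
      (rpoly (dcoef a) n x + dcoef a (S n) * x ^ S n)).
    apply (is_derive_plus (rpoly a (S n)) (fun y => a (S (S n)) * y ^ S (S n)));
      [exact IHn|].
    unfold dcoef. auto_derive; [easy|]. simpl. ring.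
Qed.

Lemma Rabs_sub_le_of_is_derive (f df : R -> R) lo hi L x y :
  (forall t, lo <= t <= hi -> is_derive f t (df t)) ->
  (forall t, lo <= t <= hi -> Rabs (df t) <= L) ->
  lo <= x <= hi -> lo <= y <= hi -> Rabs (f x - f y) <= L * Rabs (x - y).
Proof.
  intros Hd Hb Hx Hy.
  assert (Hin : forall t, Rmin y x <= t <= Rmax y x -> lo <= t <= hi).
  { intros t Ht. split.
    - apply Rle_trans with (Rmin y x); [apply Rmin_glb|]; lra.
    - apply Rle_trans with (Rmax y x); [|apply Rmax_lub]; lra. }
  destruct (MVT_gen f y x df) as [xi [Hxi ->]].
  - intros t Ht. apply Hd, Hin. lra.
  - intros t Ht. apply continuity_pt_filterlim, (@ex_derive_continuous R_AbsRing R_NormedModule).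
    eexists. apply Hd, Hin, Ht.
  - rewrite Rabs_mult. apply Rmult_le_compat_r; [apply Rabs_pos|]. apply Hb, Hin, Hxi.
Qed.

Lemma rpoly_lipschitz a n b x y :
  1 <= b -> 0 <= x <= b -> 0 <= y <= b ->
  Rabs (rpoly a (S n) x - rpoly a (S n) y) <= coef_norm (dcoef a) n * b ^ n * Rabs (x - y).
Proof.
  intros Hb Hx Hy.
  apply (Rabs_sub_le_of_is_derive _ (rpoly (dcoef a) n) 0 b); auto.
  - intros t _. apply is_derive_rpoly.
  - intros t Ht. apply rpoly_abs_le; [assumption|]. rewrite Rabs_right; lra.
Qed.

Lemma Rabs_cos_sub_le u v : Rabs (cos u - cos v) <= Rabs (u - v).
Proof.
  rewrite <- (Rmult_1_l (Rabs (u - v))).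
  apply (Rabs_sub_le_of_is_derive cos (fun t => - sin t) (Rmin u v) (Rmax u v)).
  - intros t _. apply is_derive_cos.
  - intros t _. rewrite Rabs_Ropp. apply Rabs_le, SIN_bound.
  - split; [apply Rmin_l | apply Rmax_l].
  - split; [apply Rmin_r | apply Rmax_r].
Qed.

Lemma rpoly_ge_half_pow a m x :
  1 <= a (S m) -> 1 + 2 * coef_norm a m <= x -> x ^ S m / 2 <= rpoly a (S m) x.
Proof.
  intros Ha Hx.
  change (rpoly a (S m) x) with (rpoly a m x + a (S m) * (x * x ^ m)).
  pose proof (coef_norm_ge0 a m).
  assert (Hq : 0 <= x ^ m) by (apply pow_le; lra).
  assert (Hlow := rpoly_abs_le a m x x ltac:(lra) ltac:(rewrite Rabs_right; lra)).
  apply Rabs_le_between in Hlow.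
  assert (0 <= (a (S m) - 1) * (x * x ^ m)) by (apply Rmult_le_pos; nra).
  assert (0 <= (x - 2 * coef_norm a m) * x ^ m) by (apply Rmult_le_pos; lra).
  simpl. lra.
Qed.

Lemma fpoly_nat_int c r j : exists z, fpoly c r (INR j) = IZR z.
Proof.
  induction r as [|r [z Hz]].
  - exists (c 0%nat). unfold fpoly; simpl. ring.
  - exists (z + c (S r) * Z.of_nat j ^ Z.of_nat (S r))%Z.
    change (fpoly c (S r) (INR j)) with (fpoly c r (INR j) + IZR (c (S r)) * INR j ^ S r).
    rewrite Hz, plus_IZR, mult_IZR, <- pow_IZR, <- INR_IZR_INZ. reflexivity.
Qed.

Lemma cos_period_Z x k : cos (x + 2 * IZR k * PI) = cos x.
Proof.
  destruct (Z_le_gt_dec 0 k).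
  - rewrite <- (Z2Nat.id k) by lia. rewrite <- INR_IZR_INZ. apply cos_period.
  - replace k with (- Z.of_nat (Z.to_nat (- k)))%Z by lia.
    rewrite opp_IZR, <- INR_IZR_INZ.
    rewrite <- (cos_period (x + 2 * - INR (Z.to_nat (- k)) * PI) (Z.to_nat (- k))).
    f_equal. ring.
Qed.

Lemma cos_2PI_mul_int_shift alpha a0 z :
  cos (2 * PI * (alpha * IZR z)) = cos (2 * PI * (alpha - IZR a0) * IZR z).
Proof.
  rewrite <- (cos_period_Z (2 * PI * (alpha - IZR a0) * IZR z) (a0 * z)), mult_IZR.
  f_equal. ring.
Qed.

(* For [s <> 0] this is the primitive of [(1 - u / F) cos (s u)] obtained by
   integrating by parts; the case [s = 0] is its limit. *)
Definition fejer_primitive (F s u : R) : R :=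
  if Req_EM_T s 0 then u - u ^ 2 / (2 * F)
  else (1 - u / F) * sin (s * u) / s - cos (s * u) / (s ^ 2 * F).

Lemma is_derive_fejer_primitive F s u :
  F <> 0 -> is_derive (fejer_primitive F s) u ((1 - u / F) * cos (s * u)).
Proof.
  intros HF. unfold fejer_primitive. destruct (Req_EM_T s 0) as [->|Hs].
  - auto_derive; [easy|]. rewrite Rmult_0_l, cos_0. field. exact HF.
  - auto_derive; [repeat split; assumption|]. field. split; assumption.
Qed.

(* Positivity of the Fejer kernel: the increment over [0, F] is
   [(1 - cos (s F)) / (s^2 F)]. *)
Lemma fejer_primitive_increment_ge0 F s :
  0 < F -> fejer_primitive F s 0 <= fejer_primitive F s F.
Proof.
  intros HF. unfold fejer_primitive. destruct (Req_EM_T s 0) as [_|Hs].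
  - replace (F - F ^ 2 / (2 * F)) with (F / 2) by (field; lra).
    replace (0 - 0 ^ 2 / (2 * F)) with 0 by (field; lra). lra.
  - assert (0 < s ^ 2) by (apply pow2_gt_0; exact Hs).
    pose proof (COS_bound (s * F)).
    rewrite Rmult_0_r, sin_0, cos_0.
    assert (0 <= (1 - cos (s * F)) / (s ^ 2 * F)) by (apply Rdiv_le_0_compat; nra).
    match goal with |- ?l <= ?r => enough (r - l = (1 - cos (s * F)) / (s ^ 2 * F)) by lra end.
    field. lra.
Qed.

Lemma fejer_primitive_increment_ge F s u0 :
  0 < F -> 0 <= u0 <= F -> - u0 <= fejer_primitive F s F - fejer_primitive F s u0.
Proof.
  intros HF Hu0.
  assert (Hlip : Rabs (fejer_primitive F s u0 - fejer_primitive F s 0) <= 1 * Rabs (u0 - 0)).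
  { apply (Rabs_sub_le_of_is_derive _ (fun u => (1 - u / F) * cos (s * u)) 0 F); try lra.
    - intros t _. apply is_derive_fejer_primitive. lra.
    - intros t Ht. rewrite Rabs_mult.
      assert (0 <= t / F <= 1) by (split; [apply Rdiv_le_0_compat | apply Rle_div_l]; lra).
      assert (Rabs (cos (s * t)) <= 1) by apply Rabs_le, COS_bound.
      rewrite Rabs_right by lra. pose proof (Rabs_pos (cos (s * t))). nra. }
  rewrite Rminus_0_r, (Rabs_right u0), Rmult_1_l in Hlip by lra.
  apply Rabs_le_between in Hlip.
  pose proof (fejer_primitive_increment_ge0 F s HF). lra.
Qed.

Lemma is_derive_fejer_rpoly a n F s x :
  F <> 0 ->
  is_derive (fun y => fejer_primitive F s (rpoly a (S n) y)) x
    (rpoly (dcoef a) n x * (1 - rpoly a (S n) x / F) * cos (s * rpoly a (S n) x)).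
Proof.
  intros HF.
  pose proof (is_derive_comp _ _ x _ _
    (is_derive_fejer_primitive F s (rpoly a (S n) x) HF) (is_derive_rpoly a n x)) as H.
  unfold scal in H; simpl in H; unfold mult in H; simpl in H.
  rewrite <- Rmult_assoc in H. exact H.
Qed.

Lemma ex_derive_rpoly a n x : ex_derive (rpoly a n) x.
Proof.
  destruct n as [|n].
  - unfold rpoly; simpl. auto_derive. easy.
  - eexists. apply is_derive_rpoly.
Qed.

Lemma RInt_rpoly_weight a n b :
  rpoly a (S n) b <> 0 ->
  RInt (fun x => rpoly (dcoef a) n x * (1 - rpoly a (S n) x / rpoly a (S n) b)) 0 b
  = (rpoly a (S n) b - rpoly a (S n) 0) ^ 2 / (2 * rpoly a (S n) b).
Proof.
  intros HF. set (F := rpoly a (S n) b).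
  set (w := fun x => rpoly (dcoef a) n x * (1 - rpoly a (S n) x / F)).
  assert (Hw : forall x, w x = w x * cos (0 * rpoly a (S n) x))
    by (intros x; rewrite Rmult_0_l, cos_0, Rmult_1_r; reflexivity).
  apply is_RInt_unique, (is_RInt_ext (fun x => w x * cos (0 * rpoly a (S n) x))).
  { intros x _. symmetry. apply Hw. }
  replace ((F - rpoly a (S n) 0) ^ 2 / (2 * F))
    with (minus (fejer_primitive F 0 F) (fejer_primitive F 0 (rpoly a (S n) 0))).
  - apply (is_RInt_derive (fun y => fejer_primitive F 0 (rpoly a (S n) y))).
    + intros x _. apply is_derive_fejer_rpoly, HF.
    + intros x _. apply (continuous_ext w); [exact Hw|].
      apply (@ex_derive_continuous R_AbsRing R_NormedModule). unfold w.
      auto_derive. repeat split; apply ex_derive_rpoly.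
  - unfold fejer_primitive, minus, plus, opp; simpl.
    destruct (Req_EM_T 0 0) as [_|]; [|lra]. field. exact HF.
Qed.

Lemma Re_sum_n_m (u : nat -> C) lo hi :
  Re (sum_n_m u lo hi) = sum_n_m (fun j => Re (u j)) lo hi.
Proof.
  induction hi as [|hi IH].
  - destruct lo as [|lo].
    + rewrite !sum_n_n. reflexivity.
    + rewrite !sum_n_m_zero by lia. reflexivity.
  - destruct (Nat.le_gt_cases lo (S hi)) as [Hle|Hgt].
    + rewrite !sum_n_Sm by exact Hle. simpl. rewrite <- IH. reflexivity.
    + rewrite !sum_n_m_zero by exact Hgt. reflexivity.
Qed.

Lemma sum_n_m_ge_increment (Phi H : R -> R) E N :
  (forall x, 0 <= x <= INR N -> is_derive Phi x (H x)) ->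
  (forall x y, 0 <= x <= INR N -> 0 <= y <= INR N -> Rabs (x - y) <= 1 ->
     Rabs (H x - H y) <= E) ->
  Phi (INR N) - Phi 0 - INR N * E <= sum_n_m (fun j => H (INR j)) 1 N.
Proof.
  induction N as [|N IH]; intros Hd Hosc.
  - rewrite sum_n_m_zero by lia. simpl. unfold zero; simpl. lra.
  - rewrite sum_n_Sm by lia. change (plus ?u ?v) with (u + v).
    pose proof (pos_INR N) as HN0. rewrite S_INR in *.
    assert (IHN : Phi (INR N) - Phi 0 - INR N * E <= sum_n_m (fun j => H (INR j)) 1 N).
    { apply IH.
      - intros x Hx. apply Hd. lra.
      - intros x y Hx Hy. apply Hosc; lra. }
    destruct (MVT_gen Phi (INR N) (INR N + 1) H) as [xi [Hxi Hinc]].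
    + intros x Hx. rewrite Rmin_left, Rmax_right in Hx by lra. apply Hd. lra.
    + intros x Hx. rewrite Rmin_left, Rmax_right in Hx by lra.
      apply continuity_pt_filterlim, (@ex_derive_continuous R_AbsRing R_NormedModule).
      eexists. apply Hd. lra.
    + rewrite Rmin_left, Rmax_right in Hxi by lra.
      assert (Hclose : Rabs (H xi - H (INR N + 1)) <= E).
      { apply Hosc; try lra. apply Rabs_le. lra. }
      apply Rabs_le_between in Hclose.
      replace (INR N + 1 - INR N) with 1 in Hinc by ring.
      lra.
Qed.

Lemma real_Glb_Rbar_ge (E : R -> Prop) b y0 :
  E y0 -> (forall y, E y -> b <= y) -> b <= real (Glb_Rbar E).
Proof.
  intros Hy Hb. destruct (Glb_Rbar_correct E) as [Hlow Hgreat].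
  assert (Rbar_le (Glb_Rbar E) y0) by (apply Hlow, Hy).
  assert (Rbar_le b (Glb_Rbar E)) by (apply Hgreat; intros y Ey; apply Hb, Ey).
  destruct (Glb_Rbar E); simpl in *; easy.
Qed.

Lemma eventually_INR_ge M : eventually (fun N => M <= INR N).
Proof. apply is_lim_seq_INR. exists M. intros x Hx. lra. Qed.

Lemma LimInf_seq_ge0_of_bound (u : nat -> R) K :
  0 <= K -> eventually (fun N => - K / sqrt (INR N) <= u N) -> Rbar_le 0 (LimInf_seq u).
Proof.
  intros HK Hu.
  assert (Heps : forall eps, 0 < eps -> Rbar_le (- eps) (LimInf_seq u)).
  { intros eps Heps. rewrite <- (LimInf_seq_const (- eps)). apply LimInf_le.
    eapply filter_imp;
      [|apply filter_and; [apply Hu | apply (eventually_INR_ge ((K / eps) ^ 2 + 1))]].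
    intros N [HuN HN]. simpl in HN.
    assert (Hsq : K / eps <= sqrt (INR N)).
    { rewrite <- (sqrt_pow2 (K / eps)) by (apply Rdiv_le_0_compat; lra).
      apply sqrt_le_1_alt. lra. }
    assert (0 < sqrt (INR N)) by (apply sqrt_lt_R0; pose proof (pow2_ge_0 (K / eps)); lra).
    assert (K / sqrt (INR N) <= eps).
    { apply Rle_div_l; [assumption|]. apply Rle_div_l in Hsq; lra. }
    unfold Rdiv in *. lra. }
  destruct (LimInf_seq u) as [l| |]; simpl in *; trivial.
  - destruct (Rle_dec 0 l) as [|Hl]; [assumption|].
    specialize (Heps (- l / 2) ltac:(lra)). simpl in Heps. lra.
  - apply (Heps 1). lra.
Qed.

Lemma Re_SN_shift c r N alpha a0 :
  Re (SN c r N alpha) = sum_n_m (fun j =>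
    2 * gN c r N (INR j) * cos (2 * PI * (alpha - IZR a0) * fpoly c r (INR j))) 1 N.
Proof.
  unfold SN. rewrite Re_sum_n_m. apply sum_n_m_ext. intros j.
  destruct (fpoly_nat_int c r j) as [z ->].
  unfold e; simpl.
  rewrite <- !cos_2PI_mul_int_shift.
  replace (2 * PI * (- alpha * IZR z)) with (- (2 * PI * (alpha * IZR z))) by ring.
  rewrite cos_neg. ring.
Qed.

Lemma gN_rpoly c n N x :
  let a := fun k => IZR (c k) in
  gN c (S n) N x
  = rpoly (dcoef a) n x * (1 - rpoly a (S n) x / rpoly a (S n) (INR N))
    / RInt (fun y => rpoly (dcoef a) n y * (1 - rpoly a (S n) y / rpoly a (S n) (INR N)))
        0 (INR N).
Proof.
  intros a.
  assert (HD : forall y, Derive (fpoly c (S n)) y = rpoly (dcoef a) n y)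
    by (intros y; apply is_derive_unique, is_derive_rpoly).
  unfold gN, hN. rewrite HD. f_equal.
  apply RInt_ext. intros y _. rewrite HD. reflexivity.
Qed.

Lemma Rabs_mul3_sub_le x1 x2 y1 y2 z1 z2 :
  Rabs (x1 * y1 * z1 - x2 * y2 * z2)
  <= Rabs (x1 - x2) * Rabs y1 * Rabs z1 + Rabs x2 * Rabs (y1 - y2) * Rabs z1
     + Rabs x2 * Rabs y2 * Rabs (z1 - z2).
Proof.
  replace (x1 * y1 * z1 - x2 * y2 * z2)
    with ((x1 - x2) * y1 * z1 + x2 * (y1 - y2) * z1 + x2 * y2 * (z1 - z2)) by ring.
  eapply Rle_trans; [apply Rabs_triang|].
  apply Rplus_le_compat; [eapply Rle_trans; [apply Rabs_triang|]|]; rewrite ?Rabs_mult; lra.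
Qed.

Lemma pow_mul_Rpower_le_inv_sqrt n m :
  1 <= n -> n ^ S m * Rpower n (- INR (S (S m)) + / INR (S (S m))) <= / sqrt n.
Proof.
  intros Hn.
  rewrite <- Rpower_pow, <- Rpower_plus, <- Rpower_sqrt, <- Rpower_Ropp by lra.
  apply Rle_Rpower; [assumption|].
  rewrite (S_INR (S m)).
  assert (2 <= INR (S m) + 1) by (rewrite S_INR; pose proof (pos_INR m); lra).
  assert (/ (INR (S m) + 1) <= / 2) by (apply Rinv_le_contravar; lra).
  lra.
Qed.

(* Up to the factor [N^(-1/2)], the three summands bound the contributions of
   [f 0], of the variation of [f' (1 - f / f N)], and of the phase [s f]. *)
Definition decay_const (a : nat -> R) (m : nat) : R :=
  let A0 := coef_norm a (S (S m)) in
  let A1 := coef_norm (dcoef a) (S m) in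
  let A2 := coef_norm (dcoef (dcoef a)) m in
  32 * rpoly a (S (S m)) 0 + 32 * (A2 * (1 + 2 * A0) + 2 * A1 ^ 2)
  + 64 * PI * ((1 + 2 * A0) * A1 ^ 2).

Lemma decay_const_ge0 a m : 0 <= rpoly a (S (S m)) 0 -> 0 <= decay_const a m.
Proof.
  intros Hf0. unfold decay_const.
  pose proof (coef_norm_ge0 a (S (S m))). pose proof (coef_norm_ge0 (dcoef a) (S m)).
  pose proof (coef_norm_ge0 (dcoef (dcoef a)) m). pose proof PI_RGT_0.
  assert (0 <= coef_norm (dcoef a) (S m) ^ 2) by apply pow2_ge_0.
  assert (0 <= (1 + 2 * coef_norm a (S (S m))) * coef_norm (dcoef a) (S m) ^ 2) by nra.
  assert (0 <= coef_norm (dcoef (dcoef a)) m * (1 + 2 * coef_norm a (S (S m)))) by nra.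
  nra.
Qed.

Section Estimate.

Variables (a : nat -> R) (m N : nat) (s : R).

Let f := rpoly a (S (S m)).
Let df := rpoly (dcoef a) (S m).
Let n := INR N.
Let F := f n.
Let A0 := coef_norm a (S (S m)).
Let A1 := coef_norm (dcoef a) (S m).
Let A2 := coef_norm (dcoef (dcoef a)) m.

Hypothesis lead_ge1 : 1 <= a (S (S m)).
Hypothesis f0_pos : 0 < f 0.
Hypothesis N_large : 1 + 2 * coef_norm a (S m) + 4 * f 0 <= n.

Lemma n_ge1 : 1 <= n.
Proof. pose proof (coef_norm_ge0 a (S m)). lra. Qed.

Lemma pow_m_ge1 : 1 <= n ^ m.
Proof. apply pow_R1_Rle, n_ge1. Qed.

Lemma F_ge : n * (n * n ^ m) / 2 <= F.
Proof. apply (rpoly_ge_half_pow a (S m) n lead_ge1 ltac:(lra)). Qed.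

Lemma F_ge_f0 : 2 * f 0 <= F.
Proof.
  pose proof n_ge1. pose proof pow_m_ge1. pose proof F_ge. pose proof (coef_norm_ge0 a (S m)).
  assert (n <= n * (n * n ^ m)) by nra.
  lra.
Qed.

Lemma weight_integral_ge : F / 8 <= RInt (fun x => df x * (1 - f x / F)) 0 n.
Proof.
  pose proof F_ge_f0.
  unfold df, F, f. rewrite RInt_rpoly_weight by (fold f F; lra). fold f F.
  replace (F / 8) with ((F / 2) ^ 2 / (2 * F)) by (field; lra).
  apply Rmult_le_compat_r; [apply Rlt_le, Rinv_0_lt_compat; lra|].
  apply pow_incr. lra.
Qed.

Lemma weight_abs_le z : 0 <= z <= n -> Rabs (1 - f z / F) <= 1 + 2 * A0.
Proof.
  intros Hz. pose proof n_ge1. pose proof F_ge. pose proof F_ge_f0.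
  assert (HA0 : 0 <= A0) by apply coef_norm_ge0.
  assert (Hfz : Rabs (f z) <= A0 * (n * (n * n ^ m)))
    by (apply (rpoly_abs_le a (S (S m)) z n); [| rewrite Rabs_right]; lra).
  unfold Rminus. eapply Rle_trans; [apply Rabs_triang|].
  rewrite Rabs_R1, Rabs_Ropp, Rabs_div, (Rabs_right F) by lra.
  apply Rplus_le_compat_l, Rle_div_l; [lra|].
  assert (A0 * (n * (n * n ^ m)) <= A0 * (2 * F)) by (apply Rmult_le_compat_l; lra).
  lra.
Qed.

Lemma df_mul_weight_sub_le x y :
  0 <= x <= n -> 0 <= y <= n -> Rabs (x - y) <= 1 ->
  Rabs (df y) * Rabs ((1 - f x / F) - (1 - f y / F)) <= 2 * A1 ^ 2 * n ^ m.
Proof.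
  intros Hx Hy Hxy. pose proof n_ge1. pose proof pow_m_ge1. pose proof F_ge. pose proof F_ge_f0.
  set (q := n ^ m) in *.
  assert (HA1 : 0 <= A1) by apply coef_norm_ge0.
  assert (Hdf : Rabs (df y) <= A1 * (n * q))
    by (apply (rpoly_abs_le (dcoef a) (S m) y n); [| rewrite Rabs_right]; lra).
  assert (Hdiff : Rabs (f x - f y) <= A1 * (n * q)).
  { eapply Rle_trans; [apply (rpoly_lipschitz a (S m) n x y); assumption|].
    rewrite <- (Rmult_1_r (A1 * (n * q))).
    apply Rmult_le_compat_l; [apply Rmult_le_pos; nra | assumption]. }
  replace ((1 - f x / F) - (1 - f y / F)) with (- ((f x - f y) / F)) by (field; lra).
  rewrite Rabs_Ropp, Rabs_div, (Rabs_right F) by lra.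
  unfold Rdiv. rewrite <- Rmult_assoc. apply Rle_div_l; [lra|].
  apply Rle_trans with (A1 * (n * q) * (A1 * (n * q))).
  - apply Rmult_le_compat; auto using Rabs_pos.
  - assert (0 <= A1 ^ 2 * q) by (apply Rmult_le_pos; nra). nra.
Qed.

Let B := A2 * (1 + 2 * A0) + 2 * A1 ^ 2.
Let C := (1 + 2 * A0) * A1 ^ 2.
Let H x := df x * (1 - f x / F) * cos (s * f x).

Lemma B_C_ge0 : 0 <= B /\ 0 <= C.
Proof.
  assert (0 <= A0 /\ 0 <= A1 /\ 0 <= A2) as (HA0 & HA1 & HA2)
    by (repeat split; apply coef_norm_ge0).
  assert (0 <= A1 ^ 2) by apply pow2_ge_0.
  unfold B, C. split; nra.
Qed.

Lemma H_oscillation x y :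
  0 <= x <= n -> 0 <= y <= n -> Rabs (x - y) <= 1 ->
  Rabs (H x - H y) <= n ^ m * B + C * Rabs s * (n * n ^ m) ^ 2.
Proof.
  intros Hx Hy Hxy. pose proof n_ge1. pose proof pow_m_ge1.
  set (q := n ^ m) in *.
  assert (0 <= A0 /\ 0 <= A1 /\ 0 <= A2) as (HA0 & HA1 & HA2)
    by (repeat split; apply coef_norm_ge0).
  assert (Hddf : Rabs (df x - df y) <= A2 * q).
  { eapply Rle_trans; [apply (rpoly_lipschitz (dcoef a) m n x y); assumption|].
    rewrite <- (Rmult_1_r (A2 * q)). apply Rmult_le_compat_l; [nra | assumption]. }
  assert (Hdf : Rabs (df y) <= A1 * (n * q))
    by (apply (rpoly_abs_le (dcoef a) (S m) y n); [| rewrite Rabs_right]; lra).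
  assert (Hcos : Rabs (cos (s * f x) - cos (s * f y)) <= Rabs s * (A1 * (n * q))).
  { eapply Rle_trans; [apply Rabs_cos_sub_le|].
    rewrite <- Rmult_minus_distr_l, Rabs_mult.
    apply Rmult_le_compat_l; [apply Rabs_pos|].
    eapply Rle_trans; [apply (rpoly_lipschitz a (S m) n x y); assumption|].
    rewrite <- (Rmult_1_r (A1 * (n * q))).
    apply Rmult_le_compat_l; [apply Rmult_le_pos; nra | assumption]. }
  pose proof (weight_abs_le x Hx). pose proof (weight_abs_le y Hy).
  pose proof (df_mul_weight_sub_le x y Hx Hy Hxy).
  assert (Hc1 : Rabs (cos (s * f x)) <= 1) by apply Rabs_le, COS_bound.
  eapply Rle_trans; [apply Rabs_mul3_sub_le|].
  assert (T1 : Rabs (df x - df y) * Rabs (1 - f x / F) * Rabs (cos (s * f x))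
               <= A2 * q * (1 + 2 * A0) * 1).
  { repeat apply Rmult_le_compat; auto using Rabs_pos, Rmult_le_pos. }
  assert (T2 : Rabs (df y) * Rabs ((1 - f x / F) - (1 - f y / F)) * Rabs (cos (s * f x))
               <= 2 * A1 ^ 2 * q * 1).
  { apply Rmult_le_compat; auto using Rabs_pos, Rmult_le_pos. }
  assert (T3 : Rabs (df y) * Rabs (1 - f y / F) * Rabs (cos (s * f x) - cos (s * f y))
               <= A1 * (n * q) * (1 + 2 * A0) * (Rabs s * (A1 * (n * q)))).
  { repeat apply Rmult_le_compat; auto using Rabs_pos, Rmult_le_pos. }
  unfold H, B, C. lra.
Qed.

Lemma sum_H_ge :
  - f 0 - n * (n ^ m * B + C * Rabs s * (n * n ^ m) ^ 2) <= sum_n_m (fun j => H (INR j)) 1 N.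
Proof.
  pose proof F_ge_f0.
  pose proof (fejer_primitive_increment_ge F s (f 0) ltac:(lra) ltac:(lra)).
  eapply Rle_trans;
    [|apply (sum_n_m_ge_increment (fun y => fejer_primitive F s (f y)) H
               (n ^ m * B + C * Rabs s * (n * n ^ m) ^ 2))].
  - fold n F. lra.
  - intros x _. apply is_derive_fejer_rpoly. lra.
  - intros x y Hx Hy Hxy. apply H_oscillation; assumption.
Qed.

Hypothesis s_small : Rabs s <= 2 * PI * Rpower n (- INR (S (S m)) + / INR (S (S m))).

Lemma oscillation_total_le :
  32 / (n * (n * n ^ m)) * (f 0 + n * (n ^ m * B + C * Rabs s * (n * n ^ m) ^ 2))
  <= decay_const a m / sqrt n.
Proof.
  pose proof n_ge1. pose proof pow_m_ge1. pose proof PI_RGT_0.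
  set (q := n ^ m) in *.
  destruct B_C_ge0 as [HB HC].
  assert (Hnnq : n <= n * (n * q)) by nra.
  assert (Hsqrt : 0 < sqrt n <= n).
  { split; [apply sqrt_lt_R0; lra|].
    rewrite <- (sqrt_square n) at 2 by lra. apply sqrt_le_1_alt. nra. }
  assert (Hu1 : / (n * (n * q)) <= / sqrt n) by (apply Rinv_le_contravar; lra).
  assert (Hu2 : / n <= / sqrt n) by (apply Rinv_le_contravar; lra).
  assert (Hu3 : Rabs s * (n * q) <= 2 * PI * / sqrt n).
  { pose proof (pow_mul_Rpower_le_inv_sqrt n m ltac:(lra)).
    change (n ^ S m) with (n * q) in *.
    apply Rle_trans with (2 * PI * Rpower n (- INR (S (S m)) + / INR (S (S m))) * (n * q)).
    - apply Rmult_le_compat_r; nra.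
    - rewrite Rmult_assoc, (Rmult_comm (Rpower _ _)). apply Rmult_le_compat_l; lra. }
  change (decay_const a m) with (32 * f 0 + 32 * B + 64 * PI * C).
  replace (32 / (n * (n * q)) * (f 0 + n * (q * B + C * Rabs s * (n * q) ^ 2)))
    with (32 * f 0 * / (n * (n * q)) + 32 * B * / n + 32 * C * (Rabs s * (n * q)))
    by (field; lra).
  unfold Rdiv.
  assert (32 * f 0 * / (n * (n * q)) <= 32 * f 0 * / sqrt n)
    by (apply Rmult_le_compat_l; lra).
  assert (32 * B * / n <= 32 * B * / sqrt n) by (apply Rmult_le_compat_l; lra).
  assert (32 * C * (Rabs s * (n * q)) <= 32 * C * (2 * PI * / sqrt n))
    by (apply Rmult_le_compat_l; lra).
  lra.
Qed.

Lemma weighted_sum_ge :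
  - decay_const a m / sqrt n
  <= sum_n_m (fun j => 2 * (df (INR j) * (1 - f (INR j) / F)
                            / RInt (fun x => df x * (1 - f x / F)) 0 n)
                       * cos (s * f (INR j))) 1 N.
Proof.
  set (I := RInt (fun x => df x * (1 - f x / F)) 0 n).
  pose proof n_ge1. pose proof pow_m_ge1. pose proof F_ge. pose proof F_ge_f0.
  pose proof weight_integral_ge as HI. fold I in HI.
  pose proof sum_H_ge as Hsum. pose proof oscillation_total_le as Hbound.
  set (q := n ^ m) in *. set (E := q * B + C * Rabs s * (n * q) ^ 2) in *.
  destruct B_C_ge0 as [HB HC].
  assert (HE : 0 <= f 0 + n * E).
  { assert (0 <= q * B) by nra.
    assert (0 <= C * Rabs s * (n * q) ^ 2)
      by (apply Rmult_le_pos; [apply Rmult_le_pos, Rabs_pos | apply pow2_ge_0]; assumption).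
    unfold E. nra. }
  rewrite (sum_n_m_ext _ (fun j => mult (2 / I) (H (INR j))))
    by (intros j; unfold mult, H; simpl; field; lra).
  rewrite sum_n_m_mult_l.
  change (- decay_const a m / sqrt n <= 2 / I * sum_n_m (fun j => H (INR j)) 1 N).
  assert (HI2 : 2 / I <= 32 / (n * (n * q))).
  { unfold Rdiv. replace (32 * / (n * (n * q))) with (2 * / (n * (n * q) / 16)) by (field; nra).
    apply Rmult_le_compat_l; [lra|]. apply Rinv_le_contravar; nra. }
  assert (2 / I * (f 0 + n * E) <= 32 / (n * (n * q)) * (f 0 + n * E))
    by (apply Rmult_le_compat_r; assumption).
  assert (2 / I * (- f 0 - n * E) <= 2 / I * sum_n_m (fun j => H (INR j)) 1 N)
    by (apply Rmult_le_compat_l; [apply Rlt_le, Rdiv_lt_0_compat |]; lra).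
  unfold Rdiv in *. lra.
Qed.

End Estimate.

Theorem lemma12 (c : nat -> Z) (r : nat) :
  (3 <= r)%nat ->
  (0 < c r)%Z ->
  (forall x, 0 <= x -> 0 < fpoly c r x) ->
  (forall x y, 0 <= x -> x < y -> fpoly c r x < fpoly c r y) ->
  Rbar_le 0 (LimInf_seq (fun N : nat => infN c r N)).
Proof.
  intros Hr Hc Hpos _.
  destruct r as [|[|m]]; [lia | lia |].
  set (a := fun k => IZR (c k)).
  assert (Hlead : 1 <= a (S (S m))) by (apply IZR_le; lia).
  assert (Hf0 : 0 < rpoly a (S (S m)) 0) by apply (Hpos 0 (Rle_refl 0)).
  apply (LimInf_seq_ge0_of_bound _ (decay_const a m)); [apply decay_const_ge0; lra|].
  eapply filter_imp;
    [|apply (eventually_INR_ge (1 + 2 * coef_norm a (S m) + 4 * rpoly a (S (S m)) 0))].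
  intros N HN. unfold infN.
  apply (real_Glb_Rbar_ge _ _ (Re (SN c (S (S m)) N 0))).
  - exists 0. split; [|reflexivity]. exists 0%Z.
    assert (0 < Rpower (INR N) (- INR (S (S m)) + / INR (S (S m)))) by apply exp_pos.
    lra.
  - intros y [alpha [[a0 Halpha] ->]].
    rewrite (Re_SN_shift _ _ _ _ a0).
    erewrite sum_n_m_ext by (intros j; rewrite gN_rpoly; reflexivity).
    apply (weighted_sum_ge a m N); [assumption.. |].
    pose proof PI_RGT_0.
    rewrite Rabs_mult, (Rabs_right (2 * PI)) by lra.
    apply Rmult_le_compat_l; [lra|]. apply Rabs_le. lra.
Qed.
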